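(* Let $R$ be a Noetherian ring and $\phi$ an $m\times s$ matrix with entries in $R$. Suppose $I_1(\phi)\subseteq(a_1,\dots,a_r)$ and $a_1,\dots,a_r$ is an $R$-regular sequence. Then for every $i\ge1$, the ideal $\mathcal L+I_r(B_i(\phi))$ of $R[T_1,\dots,T_m]$ does not depend on the choices made in the construction of the $i$-th iterated Jacobian dual $B_i(\phi)$; i.e., it is uniquely determined by $\phi$ and $a_1,\dots,a_r$.
   Context: Grade $R[T_1,\dots,T_m]$ by $\deg T_j=1$, $\deg R=0$. $\mathcal L$ is the ideal generated by the entries of $[T_1\cdots T_m]\cdot\phi$. For a matrix $M$ with $r$ rows, $(\underline a\cdot M)$ denotes the ideal generated by the entries of $[a_1\cdots a_r]\cdot M$, and $I_r(M)$ its ideal of $r\times r$ minors. Iterated Jacobian duals: $B_1(\phi)$ is any $r\times s$ matrix with entries linear forms in $T_1,\dots,T_m$ with coefficients in $R$ such that $[T_1\cdots T_m]\cdot\phi=[a_1\cdots a_r]\cdot B_1(\phi)$; set $\mathcal L_1=\mathcal L$. Given $B_{i-1}(\phi)$ (with $r$ rows, entries homogeneous of constant degree along each column) and $\mathcal L_{i-1}=(\underline a\cdot B_{i-1}(\phi))$, choose homogeneous $u_1,\dots,u_l$ with $\mathcal L_{i-1}+(I_r(B_{i-1}(\phi))\cap(a_1,\dots,a_r))=\mathcal L_{i-1}+(u_1,\dots,u_l)$, choose a matrix $C$ with homogeneous entries of constant degree along each column with $[u_1\cdots u_l]=[a_1\cdots a_r]\cdot C$, and set $B_i(\phi)=[B_{i-1}(\phi)\,|\,C]$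 (concatenation) and $\mathcal L_i=(\underline a\cdot B_i(\phi))$. *)

From HB Require Import structures.
From mathcomp Require Import all_boot all_order all_algebra.
From mathcomp Require Import mpoly.
Set Implicit Arguments. Unset Strict Implicit. Unset Printing Implicit Defensive.
Import Order.TTheory GRing.Theory.
Local Open Scope ring_scope.

Definition is_ideal (A : comNzRingType) (I : A -> Prop) : Prop :=
  [/\ I 0, (forall x y, I x -> I y -> I (x + y)) & (forall c x, I x -> I (c * x))].

Definition ideal_span (A : comNzRingType) (G : A -> Prop) : A -> Prop :=
  fun x => exists (s c : seq A),
    [/\ (forall g, g \in s -> G g), size c = size s &
        x = \sum_(i < size s) c`_i * s`_i].

Definition ideal_add (A : comNzRingType) (I J : A -> Prop) : A -> Prop :=
  ideal_span (fun x => I x \/ J x).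

Definition ideal_cap (A : comNzRingType) (I J : A -> Prop) : A -> Prop :=
  fun x => I x /\ J x.

Definition ideal_eq (A : comNzRingType) (I J : A -> Prop) : Prop :=
  forall x, I x <-> J x.

Definition entries_ideal (A : comNzRingType) p q (M : 'M[A]_(p, q)) : A -> Prop :=
  ideal_span (fun x => exists i j, x = M i j).

Definition row_ideal (A : comNzRingType) r q (a : 'rV[A]_r) (M : 'M[A]_(r, q))
  : A -> Prop := entries_ideal (a *m M).

Definition minors_ideal (A : comNzRingType) r q (M : 'M[A]_(r, q)) : A -> Prop :=
  ideal_span (fun x => exists f : 'I_r -> 'I_q,
                 (forall i j : 'I_r, (i < j)%N -> (f i < f j)%N) /\
                 x = \det (colsub f M)).

Definition noetherian (A : comNzRingType) : Prop :=
  forall I : A -> Prop, is_ideal I ->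
    exists s : seq A, ideal_eq I (ideal_span (fun x => x \in s)).

Definition regular_seq (A : comNzRingType) r (a : 'rV[A]_r) : Prop :=
  ~ ideal_span (fun x => exists j, x = a 0 j) 1 /\
  forall i : 'I_r, forall x : A,
    ideal_span (fun y => exists2 j : 'I_r, (j < i)%N & y = a 0 j) (a 0 i * x) ->
    ideal_span (fun y => exists2 j : 'I_r, (j < i)%N & y = a 0 j) x.

Section JacobianDual.
Variables (R : comNzRingType) (m s r : nat).
Variable (phi : 'M[R]_(m, s)) (a : 'rV[R]_r).

Local Notation S := {mpoly R[m]}.

Definition Tvars : 'rV[S]_m := \row_(i < m) 'X_i.
Definition phiS : 'M[S]_(m, s) := map_mx (fun c => c%:MP) phi.
Definition aS : 'rV[S]_r := map_mx (fun c => c%:MP) a.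

Definition Lideal : S -> Prop := entries_ideal (Tvars *m phiS).

Definition aIdealS : S -> Prop := ideal_span (fun x => exists j, x = aS 0 j).

Definition col_homog p q (M : 'M[S]_(p, q)) : Prop :=
  exists d : 'I_q -> nat, forall i j, M i j \is (d j).-homog.

(* iterated_jdual i k B  <->  B : r x k is a possible i-th iterated Jacobian
   dual B_i(phi) (for some admissible sequence of choices). *)
Inductive iterated_jdual : nat -> forall k : nat, 'M[S]_(r, k) -> Prop :=
| ijd_one (B : 'M[S]_(r, s)) :
    (forall i j, B i j \is 1.-homog) ->
    Tvars *m phiS = aS *m B ->
    iterated_jdual 1 B
| ijd_step (n k l : nat) (B : 'M[S]_(r, k)) (u : 'rV[S]_l) (C : 'M[S]_(r, l)) :
    iterated_jdual n B ->
    col_homog B ->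
    (forall j, exists d, u 0 j \is d.-homog) ->
    ideal_eq (ideal_add (row_ideal aS B) (ideal_cap (minors_ideal B) aIdealS))
             (ideal_add (row_ideal aS B) (entries_ideal u)) ->
    col_homog C ->
    u = aS *m C ->
    iterated_jdual n.+1 (row_mx B C).

End JacobianDual.

(* Write L_i for the ideal (a . B_i) that accompanies B_i.  Since a is regular,
   every syzygy of a is a combination of Koszul syzygies.  Expanding a
   determinant along such a column reduces it to the elements
   a_q cof_p - a_p cof_q, which lie in (a . X) by Cramer's rule; exchanging
   columns one at a time, a . X = a . Y forces det X - det Y into (a . Y).
   Together with Cauchy-Binet: if (a . B') <= (a . B) then
   I_r(B') <= I_r(B) + (a . B).  Induction on i then shows that
   L_(i+1) = L_i + (I_r(B_i) /\ (a)) does not depend on the choices and that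
   L_i <= L + I_r(B_i), whence I_r(B_i) <= I_r(B'_i) + L_i <= L + I_r(B'_i). *)

From HB Require Import structures.
From mathcomp Require Import all_boot all_fingroup all_algebra.
From mathcomp Require Import mpoly.
From mathcomp Require Import ring.
Set Implicit Arguments. Unset Strict Implicit. Unset Printing Implicit Defensive.
Import GRing.Theory.
Local Open Scope ring_scope.

Section Ideals.
Variable A : comNzRingType.
Implicit Types (G H I J : A -> Prop).

Lemma is_ideal_span G : is_ideal (ideal_span G).
Proof.
split.
- by exists [::], [::]; split => //; rewrite big_ord0.
- move=> x y [s1 [c1 [G1 E1 ->]]] [s2 [c2 [G2 E2 ->]]].
  exists (s1 ++ s2), (c1 ++ c2); split.
  + by move=> g; rewrite mem_cat => /orP[]; [apply: G1 | apply: G2].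
  + by rewrite !size_cat E1 E2.
  + rewrite size_cat big_split_ord /=; congr (_ + _); apply: eq_bigr => i _.
    * by rewrite !nth_cat /= E1 ltn_ord.
    * by rewrite !nth_cat /= E1 ltnNge leq_addr /= addKn.
- move=> c x [s1 [c1 [G1 E1 ->]]].
  exists s1, [seq c * y | y <- c1]; split => //; first by rewrite size_map.
  by rewrite mulr_sumr; apply: eq_bigr => i _; rewrite (nth_map 0) ?E1 // mulrA.
Qed.

Lemma ideal_span_gen G x : G x -> ideal_span G x.
Proof.
move=> Gx; exists [:: x], [:: 1]; split => //; last by rewrite big_ord1 mul1r.
by move=> g; rewrite inE => /eqP ->.
Qed.

Section IdealClosure.
Variables (I : A -> Prop) (idI : is_ideal I).

Lemma ideal0 : I 0.
Proof. by case: idI. Qed.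

Lemma idealD x y : I x -> I y -> I (x + y).
Proof. by case: idI => _ + _; apply. Qed.

Lemma idealMl c x : I x -> I (c * x).
Proof. by case: idI => _ _; apply. Qed.

Lemma idealMr c x : I x -> I (x * c).
Proof. by rewrite mulrC; apply: idealMl. Qed.

Lemma idealB x y : I x -> I y -> I (x - y).
Proof. by move=> Ix Iy; rewrite -mulN1r; apply/idealD/idealMl. Qed.

Lemma ideal_sum (T : Type) (s : seq T) (P : pred T) (F : T -> A) :
  (forall i, P i -> I (F i)) -> I (\sum_(i <- s | P i) F i).
Proof.
move=> IF; elim/big_rec: _ => [|i x Pi Ix]; first exact: ideal0.
by apply: idealD => //; apply: IF.
Qed.

Lemma ideal_span_min G : (forall x, G x -> I x) -> forall x, ideal_span G x -> I x.
Proof.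
move=> GI x [s [c [Gs _ ->]]]; apply: ideal_sum => i _.
by apply/idealMl/GI/Gs/mem_nth.
Qed.

End IdealClosure.

Lemma ideal_span_sub G H : (forall x, G x -> ideal_span H x) ->
  forall x, ideal_span G x -> ideal_span H x.
Proof. exact: (ideal_span_min (is_ideal_span H)). Qed.

Lemma ideal_span_mono G H : (forall x, G x -> H x) ->
  forall x, ideal_span G x -> ideal_span H x.
Proof. by move=> GH; apply: ideal_span_sub => x /GH /ideal_span_gen. Qed.

Lemma ideal_span_ext G H : (forall x, G x <-> H x) ->
  forall x, ideal_span G x <-> ideal_span H x.
Proof. by move=> GH x; split; apply: ideal_span_mono => y /GH. Qed.

Lemma ideal_span_fam (T : finType) (g : T -> A) x :
  ideal_span (fun y => exists j, y = g j) x <-> exists c : T -> A, x = \sum_j c j * g j.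
Proof.
pose combs y := exists c : T -> A, y = \sum_j c j * g j.
have combs_ideal : is_ideal combs.
  split.
  - by exists (fun _ => 0); rewrite big1 // => j _; rewrite mul0r.
  - move=> _ _ [c1 ->] [c2 ->]; exists (fun j => c1 j + c2 j).
    by rewrite -big_split; apply: eq_bigr => j _; rewrite mulrDl.
  - move=> c _ [c1 ->]; exists (fun j => c * c1 j).
    by rewrite mulr_sumr; apply: eq_bigr => j _; rewrite mulrA.
split; first apply: (ideal_span_min combs_ideal).
  move=> _ [j ->]; exists (fun i => (i == j)%:R).
  rewrite (bigD1 j) //= eqxx mul1r big1 ?addr0 // => i /negPf ->.
  by rewrite mul0r.
move=> [c ->]; apply: (ideal_sum (is_ideal_span _)) => j _.
by apply/(idealMl (is_ideal_span _))/ideal_span_gen; exists j.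
Qed.

Lemma is_ideal_add I J : is_ideal (ideal_add I J).
Proof. exact: is_ideal_span. Qed.

Lemma ideal_addl I J x : I x -> ideal_add I J x.
Proof. by move=> Ix; apply: ideal_span_gen; left. Qed.

Lemma ideal_addr I J x : J x -> ideal_add I J x.
Proof. by move=> Jx; apply: ideal_span_gen; right. Qed.

Lemma ideal_add_sub I J K : is_ideal K -> (forall x, I x -> K x) ->
  (forall x, J x -> K x) -> forall x, ideal_add I J x -> K x.
Proof. by move=> idK IK JK; apply: (ideal_span_min idK) => x [/IK|/JK]. Qed.

Lemma ideal_addP I J : is_ideal I -> is_ideal J ->
  forall x, ideal_add I J x -> exists y z, [/\ I y, J z & x = y + z].
Proof.
move=> idI idJ; apply: ideal_add_sub.
- split.
  + by exists 0, 0; rewrite addr0; split => //; apply: ideal0.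
  + move=> _ _ [y1 [z1 [Iy1 Jz1 ->]]] [y2 [z2 [Iy2 Jz2 ->]]].
    by exists (y1 + y2), (z1 + z2); rewrite addrACA; split => //; apply: idealD.
  + move=> c _ [y [z [Iy Jz ->]]]; exists (c * y), (c * z).
    by rewrite mulrDr; split => //; apply: idealMl.
- by move=> x Ix; exists x, 0; rewrite addr0; split => //; apply: ideal0.
- by move=> x Jx; exists 0, x; rewrite add0r; split => //; apply: ideal0.
Qed.

Lemma is_ideal_row r k (a : 'rV[A]_r) (B : 'M[A]_(r, k)) : is_ideal (row_ideal a B).
Proof. exact: is_ideal_span. Qed.

Lemma is_ideal_minors r k (B : 'M[A]_(r, k)) : is_ideal (minors_ideal B).
Proof. exact: is_ideal_span. Qed.

Lemma row_ideal_gen r k (a : 'rV[A]_r) (B : 'M[A]_(r, k)) j :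
  row_ideal a B ((a *m B) 0 j).
Proof. by apply: ideal_span_gen; exists 0, j. Qed.

Lemma row_idealP r k (a : 'rV[A]_r) (B : 'M[A]_(r, k)) x :
  row_ideal a B x <-> exists c : 'I_k -> A, x = \sum_j c j * (a *m B) 0 j.
Proof.
rewrite -ideal_span_fam; apply: ideal_span_ext => y.
by split=> [[i [j ->]]|[j ->]]; [exists j; rewrite (ord1 i) | exists 0, j].
Qed.

Lemma row_ideal_row_mx r k l (a : 'rV[A]_r) (B : 'M[A]_(r, k)) (C : 'M[A]_(r, l)) x :
  row_ideal a (row_mx B C) x <-> ideal_add (row_ideal a B) (entries_ideal (a *m C)) x.
Proof.
rewrite /row_ideal mul_mx_row; split.
- apply: ideal_span_sub => _ [i [j ->]]; case: (splitP j) => j' jE.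
    rewrite (_ : j = lshift l j') ?row_mxEl; last exact: val_inj.
    by apply/ideal_addl/ideal_span_gen; exists i, j'.
  rewrite (_ : j = rshift k j') ?row_mxEr; last exact: val_inj.
  by apply/ideal_addr/ideal_span_gen; exists i, j'.
- apply: (ideal_add_sub (is_ideal_span _)) => y; apply: ideal_span_sub => _ [i [j ->]].
    by apply: ideal_span_gen; exists i, (lshift l j); rewrite row_mxEl.
  by apply: ideal_span_gen; exists i, (rshift k j); rewrite row_mxEr.
Qed.

End Ideals.

Section RowIdealDet.
Variables (A : comNzRingType) (r : nat) (a : 'rV[A]_r).

Definition replace_col (X : 'M[A]_r) (c : 'I_r) (v : 'cV[A]_r) : 'M[A]_r :=
  \matrix_(i, j) if j == c then v i 0 else X i j.

Lemma cofactor_replace_col X c v i : cofactor (replace_col X c v) i c = cofactor X i c.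
Proof.
rewrite /cofactor; congr (_ * \det _); apply/matrixP => i' j.
by rewrite !mxE eq_sym (negPf (neq_lift c j)).
Qed.

Lemma det_replace_col X c v : \det (replace_col X c v) = \sum_i v i 0 * cofactor X i c.
Proof.
rewrite (expand_det_col _ c); apply: eq_bigr => i _.
by rewrite cofactor_replace_col mxE eqxx.
Qed.

Lemma replace_colK X c v w : replace_col (replace_col X c v) c w = replace_col X c w.
Proof. by apply/matrixP => i j; rewrite !mxE; case: eqP. Qed.

Lemma det_replace_col_delta X c p : \det (replace_col X c (delta_mx p 0)) = cofactor X p c.
Proof.
rewrite det_replace_col (bigD1 p) //= mxE !eqxx mul1r big1 ?addr0 // => i /negPf ip.
by rewrite mxE ip mul0r.
Qed.

Lemma mulmx_det_replace_col (Y : 'M[A]_r) v :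
  (a *m v) 0 0 * \det Y = \sum_j (a *m Y) 0 j * \det (replace_col Y j v).
Proof.
have adjE j : \det (replace_col Y j v) = (\adj Y *m v) j 0.
  by rewrite det_replace_col mxE; apply: eq_bigr => i _; rewrite mxE mulrC.
under eq_bigr do rewrite adjE.
transitivity (((a *m Y) *m (\adj Y *m v)) 0 0); last by rewrite mxE.
by rewrite mulmxA -(mulmxA a) mul_mx_adj mul_mx_scalar -scalemxAl [RHS]mxE mulrC.
Qed.

Lemma row_ideal_cofactor_pair X c p q :
  row_ideal a X (a 0 q * cofactor X p c - a 0 p * cofactor X q c).
Proof.
set Y := replace_col X c (delta_mx p 0).
have := mulmx_det_replace_col Y (delta_mx q 0).
rewrite det_replace_col_delta (bigD1 c) //= replace_colK det_replace_col_delta.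
have -> : (a *m (delta_mx q 0 : 'cV_r)) 0 0 = a 0 q.
  rewrite mxE (bigD1 q) //= mxE !eqxx mulr1 big1 ?addr0 // => i /negPf iq.
  by rewrite mxE iq mulr0.
have -> : (a *m Y) 0 c = a 0 p.
  rewrite mxE (bigD1 p) //= !mxE !eqxx mulr1 big1 ?addr0 // => i /negPf ip.
  by rewrite !mxE eqxx ip mulr0.
move=> ->; rewrite addrAC subrr add0r.
apply: (ideal_sum (is_ideal_row _ _)) => j jc.
apply/(idealMr (is_ideal_row _ _)); rewrite /Y.
suff -> : (a *m replace_col X c (delta_mx p 0)) 0 j = (a *m X) 0 j by apply: row_ideal_gen.
by rewrite !mxE; apply: eq_bigr => i _; rewrite !mxE (negPf jc).
Qed.

Definition koszul_syzygies := forall z : 'cV[A]_r, a *m z = 0 ->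
  exists e : 'I_r -> 'I_r -> A, forall i, z i 0 = \sum_q (e i q - e q i) * a 0 q.

Hypothesis koszul_a : koszul_syzygies.

Lemma row_ideal_det_replace_col X c v : a *m v = 0 -> row_ideal a X (\det (replace_col X c v)).
Proof.
move=> /koszul_a [e ve].
have -> : \det (replace_col X c v) =
    \sum_i \sum_q e i q * (a 0 q * cofactor X i c - a 0 i * cofactor X q c).
  rewrite det_replace_col.
  transitivity (\sum_i \sum_q e i q * (a 0 q * cofactor X i c)
                - \sum_i \sum_q e q i * (a 0 q * cofactor X i c)).
    rewrite -sumrB; apply: eq_bigr => i _; rewrite ve mulr_suml -sumrB.
    by apply: eq_bigr => q _; ring.
  rewrite [X in _ - X]exchange_big -sumrB; apply: eq_bigr => i _.
  by rewrite -sumrB; apply: eq_bigr => q _; rewrite mulrBr.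
apply: (ideal_sum (is_ideal_row _ _)) => i _.
apply: (ideal_sum (is_ideal_row _ _)) => q _.
exact/(idealMl (is_ideal_row _ _))/row_ideal_cofactor_pair.
Qed.

Lemma det_replace_colB X c v w :
  \det (replace_col X c v) - \det (replace_col X c w) = \det (replace_col X c (v - w)).
Proof.
rewrite !det_replace_col -sumrB; apply: eq_bigr => i _.
by rewrite -mulrBl; congr (_ * _); rewrite !mxE.
Qed.

Lemma replace_col_id X c : replace_col X c (col c X) = X.
Proof. by apply/matrixP => i j; rewrite !mxE; case: eqP => [->|]. Qed.

Definition mix_cols (X Y : 'M[A]_r) (k : nat) : 'M[A]_r :=
  \matrix_(i, j) if (j < k)%N then X i j else Y i j.

Lemma mix_colsS X Y k (kr : (k < r)%N) :
  mix_cols X Y k.+1 = replace_col (mix_cols X Y k) (Ordinal kr) (col (Ordinal kr) X).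
Proof.
apply/matrixP => i j; rewrite !mxE ltnS leq_eqVlt -val_eqE /=.
by case: eqP => // jk; congr (X i _); apply: val_inj.
Qed.

Lemma col_mix_cols X Y k (kr : (k < r)%N) :
  col (Ordinal kr) (mix_cols X Y k) = col (Ordinal kr) Y.
Proof. by apply/matrixP => i j; rewrite !mxE ltnn. Qed.

Lemma mulmx_mix_cols X Y k : a *m X = a *m Y -> a *m mix_cols X Y k = a *m Y.
Proof.
move=> /matrixP aXY; apply/matrixP => i j; rewrite !mxE.
case: (ltnP j k) => jk; last by apply: eq_bigr => l _; rewrite ?mxE ltnNge jk.
by have := aXY i j; rewrite !mxE => <-; apply: eq_bigr => l _; rewrite ?mxE jk.
Qed.

Lemma row_ideal_detB X Y : a *m X = a *m Y -> row_ideal a Y (\det X - \det Y).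
Proof.
move=> aXY.
suff mixP k : (k <= r)%N -> row_ideal a Y (\det (mix_cols X Y k) - \det Y).
  have -> : X = mix_cols X Y r by apply/matrixP => i j; rewrite mxE ltn_ord.
  exact: mixP.
elim: k => [_|k IHk kr].
  have -> : mix_cols X Y 0 = Y by apply/matrixP => i j; rewrite mxE.
  by rewrite subrr; apply: ideal0 (is_ideal_row _ _).
have -> : \det (mix_cols X Y k.+1) - \det Y =
    (\det (mix_cols X Y k.+1) - \det (mix_cols X Y k)) + (\det (mix_cols X Y k) - \det Y).
  by rewrite addrA subrK.
apply: (idealD (is_ideal_row _ _)); last exact: IHk (ltnW kr).
rewrite (mix_colsS _ _ kr) -{2}[mix_cols X Y k](replace_col_id _ (Ordinal kr)).
rewrite col_mix_cols det_replace_colB /row_ideal -(mulmx_mix_cols k aXY).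
by apply: row_ideal_det_replace_col; rewrite mulmxBr !colE !mulmxA aXY subrr.
Qed.

End RowIdealDet.

Section CauchyBinet.
Variable A : comNzRingType.

Lemma det_mulmx_rect n k (P : 'M[A]_(n, k)) (Q : 'M[A]_(k, n)) :
  \det (P *m Q) = \sum_(f : {ffun 'I_n -> 'I_k}) \det (rowsub f Q) * \prod_i P i (f i).
Proof.
transitivity (\sum_(f : {ffun 'I_n -> 'I_k}) \sum_(s : 'S_n)
                 (-1) ^+ s * \prod_i (P i (f i) * Q (f i) (s i))).
  rewrite exchange_big; apply: eq_bigr => /= s _; rewrite -big_distrr /=.
  congr (_ * _); rewrite -(bigA_distr_bigA (fun i j => P i j * Q j (s i))) /=.
  by apply: eq_bigr => i _; rewrite mxE.
apply: eq_bigr => f _; rewrite big_distrl /=; apply: eq_bigr => s _.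
rewrite big_split /= -mulrA; congr (_ * _); rewrite mulrC; congr (_ * _).
by apply: eq_bigr => i _; rewrite mxE.
Qed.

Lemma minors_ideal_det_colsub r k (B : 'M[A]_(r, k)) (f : 'I_r -> 'I_k) :
  minors_ideal B (\det (colsub f B)).
Proof.
have [/injectiveP f_inj|/injectivePn [i1 [i2 i12 fi12]]] := boolP (injectiveb f);
  last first.
  rewrite -det_tr (determinant_alternate i12); first exact: ideal0 (is_ideal_minors _).
  by move=> j; rewrite !mxE fi12.
pose s := sort (fun x y : 'I_k => (x <= y)%N) [seq f i | i <- enum 'I_r].
have size_s : size s = r by rewrite size_sort size_map size_enum_ord.
have f_in_s i : f i \in s by rewrite mem_sort; apply: map_f; rewrite mem_enum.
have s_sorted : sorted ltn (map val s).
  rewrite ltn_sorted_uniq_leq map_inj_uniq; last exact: val_inj.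
  rewrite sort_uniq map_inj_uniq ?enum_uniq //= sorted_map.
  by apply: sort_sorted => x y; apply: leq_total.
pose g i : 'I_k := nth (f i) s i.
have g_incr (i j : 'I_r) : (i < j)%N -> (g i < g j)%N.
  move=> ij; have := sorted_ltn_nth ltn_trans 0%N s_sorted i j.
  rewrite !inE size_map size_s !ltn_ord => /(_ isT isT ij).
  by rewrite (nth_map (f i)) ?size_s // (nth_map (f j)) ?size_s.
have sigma_lt i : (index (f i) s < r)%N by rewrite -size_s index_mem.
pose sigma i := Ordinal (sigma_lt i).
have fE i : f i = g (sigma i).
  by rewrite /g /= (set_nth_default (f i)) ?nth_index ?size_s.
have sigma_inj : injective sigma by move=> i j /(congr1 g); rewrite -!fE => /f_inj.
have -> : colsub f B = colsub g B *m perm_mx (perm sigma_inj)^-1.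
  rewrite -col_permE col_permEsub -colsub_comp.
  by apply/matrixP => i j; rewrite !mxE /= permE fE.
rewrite det_mulmx; apply/(idealMr (is_ideal_minors _))/ideal_span_gen.
by exists g.
Qed.

Lemma minors_ideal_det_mulmx r k (B : 'M[A]_(r, k)) (D : 'M[A]_(k, r)) :
  minors_ideal B (\det (B *m D)).
Proof.
rewrite -det_tr trmx_mul det_mulmx_rect.
apply: (ideal_sum (is_ideal_minors _)) => f _; apply: (idealMr (is_ideal_minors _)).
have -> : rowsub f B^T = (colsub f B)^T by apply/matrixP => i j; rewrite !mxE.
by rewrite det_tr; apply: minors_ideal_det_colsub.
Qed.

Lemma minors_ideal_row_mxl r k l (B : 'M[A]_(r, k)) (C : 'M[A]_(r, l)) x :
  minors_ideal B x -> minors_ideal (row_mx B C) x.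
Proof.
apply: ideal_span_mono => _ [f [f_incr ->]]; exists (fun i => lshift l (f i)).
by split=> //; congr (\det _); apply/matrixP => i j; rewrite [LHS]mxE [RHS]mxE row_mxEl.
Qed.

End CauchyBinet.

Section RegularSequence.
Variable A : comNzRingType.

Definition ext0 r (f : 'I_r -> A) (j : nat) : A := odflt 0 (omap f (insub j)).

Lemma ext0E r (f : 'I_r -> A) (i : 'I_r) : ext0 f i = f i.
Proof. by rewrite /ext0 valK. Qed.

Definition prefix_ideal (g : nat -> A) (n : nat) : A -> Prop :=
  ideal_span (fun y => exists2 j, (j < n)%N & y = g j).

Definition regular_prefix (g : nat -> A) (n : nat) : Prop :=
  forall i, (i < n)%N -> forall x, prefix_ideal g i (g i * x) -> prefix_ideal g i x.

Lemma prefix_idealP g n x :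
  prefix_ideal g n x <-> exists c : nat -> A, x = \sum_(j < n) c j * g j.
Proof.
rewrite /prefix_ideal (ideal_span_ext (H := fun y => exists j : 'I_n, y = g j)); last first.
  by move=> y; split=> [[j jn ->]|[j ->]]; [exists (Ordinal jn) | exists j].
rewrite ideal_span_fam; split=> [[c ->]|[c ->]]; last by exists (fun j : 'I_n => c j).
by exists (ext0 c); apply: eq_bigr => j _; rewrite ext0E.
Qed.

Lemma regular_prefix_syzygy g n : regular_prefix g n ->
  forall z : nat -> A, \sum_(i < n) g i * z i = 0 ->
  exists e : nat -> nat -> A,
    forall i, (i < n)%N -> z i = \sum_(q < n) (e i q - e q i) * g q.
Proof.
elim: n => [|n IHn] g_reg z; first by exists (fun _ _ => 0).
have g_reg' : regular_prefix g n by move=> i /ltnW; apply: g_reg.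
rewrite big_ord_recr /= => z_syz.
have /(g_reg n (ltnSn n)) /prefix_idealP [c zn] : prefix_ideal g n (g n * z n).
  apply/prefix_idealP; exists (fun j => - z j).
  apply: (@addrI _ (\sum_(i < n) g i * z i)); rewrite z_syz -big_split big1 // => i _.
  by rewrite /= mulNr mulrC subrr.
(* Regularity gives z_n = sum_j c_j g_j, so z + c g_n is a syzygy of the shorter prefix. *)
pose z' i := z i + c i * g n.
have [|e' z'E] := IHn g_reg' z'.
  rewrite /z'; under eq_bigr do rewrite mulrDr.
  rewrite big_split /= (eq_bigr (fun i : 'I_n => g n * (c i * g i)) (P := predT)
                          (F1 := fun i : 'I_n => g i * (c i * g n))); last first.
    by move=> i _; ring.
  by rewrite -mulr_sumr -zn.
exists (fun i q => if q == n then (if (i < n)%N then - c i else 0)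
                 else if i == n then 0 else e' i q).
move=> i; rewrite ltnS leq_eqVlt => /orP [/eqP -> | iltn].
  rewrite big_ord_recr /= eqxx subrr mul0r addr0 zn.
  by apply: eq_bigr => q _; rewrite (ltn_eqF (ltn_ord q)) ltn_ord sub0r opprK.
rewrite big_ord_recr /= eqxx iltn (ltn_eqF iltn).
rewrite (eq_bigr (fun q : 'I_n => (e' i q - e' q i) * g q)); last first.
  by move=> q _; rewrite (ltn_eqF (ltn_ord q)).
by rewrite -z'E // /z' subr0 mulNr addrK.
Qed.

Lemma regular_seq_prefix r (a : 'rV[A]_r) : regular_seq a -> regular_prefix (ext0 (a 0)) r.
Proof.
move=> [_ a_reg] i ir x.
have prefixE y : prefix_ideal (ext0 (a 0)) i y <->
    ideal_span (fun y => exists2 j : 'I_r, (j < Ordinal ir)%N & y = a 0 j) y.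
  apply: ideal_span_ext => z; split=> [[j ji ->]|[j ji ->]]; last by exists j; rewrite ?ext0E.
  by exists (Ordinal (ltn_trans ji ir)); rewrite // -ext0E.
by rewrite -[i]/(val (Ordinal ir)) ext0E => /prefixE /a_reg /prefixE.
Qed.

Lemma regular_prefix_koszul r (a : 'rV[A]_r) (g : nat -> A) :
  (forall j : 'I_r, g j = a 0 j) -> regular_prefix g r -> koszul_syzygies a.
Proof.
move=> gE g_reg z az0.
have [|e ze] := regular_prefix_syzygy g_reg (z := ext0 (fun i => z i 0)).
  transitivity ((a *m z) 0 0); last by rewrite az0 mxE.
  by rewrite mxE; apply: eq_bigr => i _; rewrite gE ext0E.
exists (fun i q : 'I_r => e i q) => i.
by rewrite -(ext0E (fun i => z i 0)) ze //; apply: eq_bigr => q _; rewrite gE.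
Qed.

End RegularSequence.

Section RegularMpoly.
Variables (R : comNzRingType) (n : nat).

Lemma prefix_ideal_mpolyC (g : nat -> R) k (x : {mpoly R[n]}) :
  prefix_ideal (fun j => (g j)%:MP) k x <-> forall mm, prefix_ideal g k x@_mm.
Proof.
split=> [/prefix_idealP [c ->] mm|xmm]; first apply/prefix_idealP.
  exists (fun j => (c j)@_mm); rewrite raddf_sum /=; apply: eq_bigr => j _.
  by rewrite mulrC mcoeffCM mulrC.
rewrite [x]mpolyE; apply: (ideal_sum (is_ideal_span _)) => mm _.
rewrite -mul_mpolyC; apply: (idealMr (is_ideal_span _)).
have /prefix_idealP [c ->] := xmm mm; apply/prefix_idealP; exists (fun j => (c j)%:MP).
by rewrite rmorph_sum /=; apply: eq_bigr => j _; rewrite rmorphM.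
Qed.

Lemma regular_prefix_mpolyC (g : nat -> R) k :
  regular_prefix g k -> regular_prefix (fun j => (g j)%:MP : {mpoly R[n]}) k.
Proof.
move=> g_reg i ik x /prefix_ideal_mpolyC gx; apply/prefix_ideal_mpolyC => mm.
by apply: g_reg ik _ _; rewrite -mcoeffCM.
Qed.

End RegularMpoly.

Lemma koszul_syzygies_aS (R : comNzRingType) m r (a : 'rV[R]_r) :
  regular_seq a -> koszul_syzygies (aS m a).
Proof.
move=> /regular_seq_prefix /(regular_prefix_mpolyC (n := m)).
by apply: regular_prefix_koszul => j; rewrite ext0E mxE.
Qed.

Section MinorsModuloRowIdeal.
Variables (A : comNzRingType) (r : nat) (a : 'rV[A]_r).
Hypothesis koszul_a : koszul_syzygies a.

Lemma row_ideal_mulmx k l (B : 'M[A]_(r, k)) (D : 'M[A]_(k, l)) x :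
  row_ideal a (B *m D) x -> row_ideal a B x.
Proof.
apply: ideal_span_sub => _ [i [j ->]]; rewrite (ord1 i) mulmxA; apply/row_idealP.
by exists (fun p => D p j); rewrite mxE; apply: eq_bigr => p _; rewrite mulrC.
Qed.

Lemma row_ideal_sub_mulmx k k' (B : 'M[A]_(r, k)) (B' : 'M[A]_(r, k')) :
  (forall x, row_ideal a B' x -> row_ideal a B x) ->
  exists D : 'M[A]_(k, k'), a *m B' = a *m B *m D.
Proof.
move=> B'B.
have /fin_all_exists [c cE] j :
    exists c : 'I_k -> A, (a *m B') 0 j = \sum_l c l * (a *m B) 0 l.
  exact/row_idealP/B'B/row_ideal_gen.
exists (\matrix_(l, j) c j l); apply/matrixP => i j; rewrite (ord1 i) cE [RHS]mxE.
by apply: eq_bigr => l _; rewrite mulrC !mxE.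
Qed.

Lemma minors_ideal_sub k k' (B : 'M[A]_(r, k)) (B' : 'M[A]_(r, k')) :
  (forall x, row_ideal a B' x -> row_ideal a B x) ->
  forall x, minors_ideal B' x -> ideal_add (minors_ideal B) (row_ideal a B) x.
Proof.
move=> /row_ideal_sub_mulmx [D aB'E].
apply: (ideal_span_min (is_ideal_add _ _)) => _ [f [_ ->]].
have aXY : a *m colsub f B' = a *m (B *m colsub f D).
  by rewrite mulmx_colsub aB'E -mulmx_colsub mulmxA.
rewrite -[\det _](subrK (\det (B *m colsub f D))).
apply: (idealD (is_ideal_add _ _)); last exact/ideal_addl/minors_ideal_det_mulmx.
exact/ideal_addr/row_ideal_mulmx/row_ideal_detB.
Qed.

End MinorsModuloRowIdeal.

Section IteratedJacobianDual.
Variables (R : comNzRingType) (m s r : nat) (phi : 'M[R]_(m, s)) (a : 'rV[R]_r).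
Local Notation S := {mpoly R[m]}.
Local Notation L := (Lideal phi).
Local Notation Lr B := (row_ideal (aS m a) B).
Local Notation jdual := (iterated_jdual phi a).
Local Notation aI := (@aIdealS R m r a).

Definition next_row_ideal k (B : 'M[S]_(r, k)) : S -> Prop :=
  ideal_add (Lr B) (ideal_cap (minors_ideal B) aI).

Lemma row_ideal_sub_aIdeal k (B : 'M[S]_(r, k)) x : Lr B x -> aI x.
Proof.
apply: ideal_span_sub => _ [i [j ->]]; rewrite mxE.
apply: (ideal_sum (is_ideal_span _)) => l _; apply: (idealMr (is_ideal_span _)).
by apply: ideal_span_gen; exists l; rewrite (ord1 i).
Qed.

Lemma jdual_pos n k (B : 'M[S]_(r, k)) : jdual n B -> (0 < n)%N.
Proof. by case. Qed.

Lemma row_ideal_jdual_step k l (B : 'M[S]_(r, k)) (u : 'rV[S]_l) (C : 'M[S]_(r, l)) :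
  ideal_eq (next_row_ideal B) (ideal_add (Lr B) (entries_ideal u)) -> u = aS m a *m C ->
  forall x, Lr (row_mx B C) x <-> next_row_ideal B x.
Proof. by move=> nextE uE x; rewrite row_ideal_row_mx -uE -nextE. Qed.

Lemma jdual_row_ideal_sub_minors n k (B : 'M[S]_(r, k)) : jdual n B ->
  forall x, Lr B x -> ideal_add L (minors_ideal B) x.
Proof.
elim=> {n k B} [B _ BE | n k l B u C _ IHB _ _ nextE _ uE] x.
  by rewrite /row_ideal -BE; apply: ideal_addl.
move=> /(row_ideal_jdual_step nextE uE).
have minorsBC y : minors_ideal B y -> ideal_add L (minors_ideal (row_mx B C)) y.
  by move=> /(minors_ideal_row_mxl C) /ideal_addr.
have LminorsBC y : ideal_add L (minors_ideal B) y -> ideal_add L (minors_ideal (row_mx B C)) y.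
  by apply: (ideal_add_sub (is_ideal_add _ _)) => // z; apply: ideal_addl.
by apply: (ideal_add_sub (is_ideal_add _ _)) => [y /IHB /LminorsBC | y [/minorsBC]].
Qed.

Hypothesis koszul_a : koszul_syzygies (aS m a).

Lemma next_row_ideal_sub k k' (B : 'M[S]_(r, k)) (B' : 'M[S]_(r, k')) :
  (forall x, Lr B x -> Lr B' x) -> forall x, next_row_ideal B x -> next_row_ideal B' x.
Proof.
move=> BB'; apply: (ideal_add_sub (is_ideal_add _ _)) => [y /BB' /ideal_addl //|y [By aBy]].
have [p [q [B'p B'q yE]]] := ideal_addP (is_ideal_minors _) (is_ideal_row _ _)
  (minors_ideal_sub koszul_a BB' By).
rewrite yE in aBy *.
apply: (idealD (is_ideal_add _ _)); last exact: ideal_addl.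
apply: ideal_addr; split=> //; rewrite -(addrK q p).
exact: (idealB (is_ideal_span _) aBy (row_ideal_sub_aIdeal B'q)).
Qed.

Lemma jdual_row_ideal_sub n k (B : 'M[S]_(r, k)) : jdual n B ->
  forall n' k' (B' : 'M[S]_(r, k')), jdual n' B' -> n = n' -> forall x, Lr B x -> Lr B' x.
Proof.
elim=> {n k B} [B _ BE | n k l B u C jB IHB _ _ nextE _ uE] n' k' B'.
  case=> [B'0 _ B'E _ | n0 k0 l0 B0 u0 C0 jB0 _ _ _ _ _ n0E]; last first.
    by move: (jdual_pos jB0); rewrite -(succn_inj n0E).
  by move=> x; rewrite /row_ideal -BE -B'E.
case=> [B'0 _ _ n0E | n0 k0 l0 B0 u0 C0 jB0 _ _ nextE0 _ uE0 /succn_inj n0E].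
  by move: (jdual_pos jB); rewrite (succn_inj n0E).
move=> x /(row_ideal_jdual_step nextE uE) /next_row_ideal_sub.
by move=> /(_ _ _ (IHB _ _ _ jB0 n0E)) /(row_ideal_jdual_step nextE0 uE0).
Qed.

Lemma jdual_Lideal_minors_sub n k k' (B : 'M[S]_(r, k)) (B' : 'M[S]_(r, k')) :
  jdual n B -> jdual n B' ->
  forall x, ideal_add L (minors_ideal B) x -> ideal_add L (minors_ideal B') x.
Proof.
move=> jB jB'; apply: (ideal_add_sub (is_ideal_add _ _)) => [y /ideal_addl //|y By].
have BB' := jdual_row_ideal_sub jB jB' erefl.
have := minors_ideal_sub koszul_a BB' By.
apply: (ideal_add_sub (is_ideal_add _ _)) => [z /ideal_addr //|].
exact: jdual_row_ideal_sub_minors jB'.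
Qed.

End IteratedJacobianDual.

Theorem theorem4p5 (R : comNzRingType) (m s r : nat)
  (phi : 'M[R]_(m, s)) (a : 'rV[R]_r) :
  noetherian R ->
  (forall i j, ideal_span (fun x => exists j, x = a 0 j) (phi i j)) ->
  regular_seq a ->
  forall (i k k' : nat) (B : 'M[{mpoly R[m]}]_(r, k)) (B' : 'M[{mpoly R[m]}]_(r, k')),
    (1 <= i)%N ->
    iterated_jdual phi a i B ->
    iterated_jdual phi a i B' ->
    ideal_eq (ideal_add (Lideal phi) (minors_ideal B))
             (ideal_add (Lideal phi) (minors_ideal B')).
Proof.
move=> _ _ a_reg i k k' B B' _ jB jB' x.
have koszul_a : koszul_syzygies (aS m a) := koszul_syzygies_aS a_reg.
by split; apply: (jdual_Lideal_minors_sub koszul_a (n := i)).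
Qed.
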